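(* Let $d \ge 1$, and for $i \in \{1,2\}$ let $G_i$ be a finite graph with a port numbering $\pi^i$ and a distinguished node $u_i$. Let $\Gamma_i = V(N_d(u_i)) \setminus \{u_i\}$ and let $\mathcal{F}_i$ be any family of subsets of $\Gamma_i$ that contains every singleton $\{v\}$, $v \in \Gamma_i$. If the $d$-hop neighborhoods $N_d(u_1)$ and $N_d(u_2)$ are not isomorphic as rooted graphs (rooted at $u_1$, $u_2$), then $$\{\, \tau_d^{G_1}(u_1; S) : S \in \mathcal{F}_1 \,\} \;\neq\; \{\, \tau_d^{G_2}(u_2; S) : S \in \mathcal{F}_2 \,\}.$$
   Context: A port numbering of a graph $G$ assigns to every node $v$ a bijection $\pi_v$ from the set of neighbors of $v$ to $\{1, \dots, \deg_G(v)\}$. Given $S \subseteq V(G)$ (the set of dropped nodes in a run) and a node $v \notin S$, the depth-$k$ port view $\tau_k^G(v;S)$ is defined recursively: $\tau_0^G(v;S) = \deg_G(v)$, and for $k \ge 1$, $\tau_k^G(v;S) = \big(\deg_G(v), (m_1, \dots, m_{\deg_G(v)})\big)$ where, if $w$ is the neighbor with $\pi_v(w) = j$, then $m_j = \bot$ if $w \in S$ (a dropped node sends no message), and $m_j = \big(\pi_w(v), \tau_{k-1}^G(w;S)\big)$ otherwise. This is the information a node $v$ gathers in $k$ rounds of message passing with port numbers in a run of a dropout GNN in which exactly the nodes of $S$ are dropped. The $d$-hop neighborhood $N_d(u)$ is the graph on all nodes at distance at most $d$ from $u$, containing all edges of $G$ among these nodes except those whose both endpoints are at distance exactly $d$ from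 $u$. The hypothesis that $\mathcal{F}_i$ contains all singletons expresses that every $1$-dropout of the neighborhood of $u_i$ is observed in at least one run (the ''$1$-complete'' setting); other dropout sets may be observed as well. *)

From mathcomp Require Import all_boot.
Set Implicit Arguments.
Unset Strict Implicit.
Unset Printing Implicit Defensive.

(* Port views: tau_0 = deg (VLeaf), tau_k = (deg, messages) (VNode);
   a message is None (= bot) or Some (port number pi_w(v), tau_{k-1}(w)). *)
Inductive view : Type :=
| VLeaf : nat -> view
| VNode : nat -> seq (option (nat * view)) -> view.

Section Graphs.
Variable T : finType.
Implicit Types (e : rel T) (u v w : T).

Definition simple_graph e := symmetric e /\ irreflexive e.

Definition nbrs e v : {set T} := [set w | e v w].
Definition deg e v : nat := #|nbrs e v|.

Definition port_numbering e (pi : T -> T -> nat) :=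
  forall v, {in nbrs e v &, injective (pi v)} /\
            (forall w, w \in nbrs e v -> 0 < pi v w <= deg e v).

Fixpoint tau e (pi : T -> T -> nat) (S : {set T}) (k : nat) (v : T) : view :=
  match k with
  | 0 => VLeaf (deg e v)
  | k'.+1 =>
      VNode (deg e v)
        [seq (match [pick w | e v w && (pi v w == j)] with
              | Some w => if w \in S then None
                          else Some (pi w v, tau e pi S k' w)
              | None => None
              end) | j <- iota 1 (deg e v)]
  end.

Fixpoint ball e (k : nat) u : {set T} :=
  match k with
  | 0 => [set u]
  | k'.+1 => ball e k' u :|: [set w | [exists x in ball e k' u, e x w]]
  end.

Definition at_dist e (d : nat) u v : bool :=
  (v \in ball e d u) && (if d is d'.+1 then v \notin ball e d' u else true).

Definition nbhd_edge e (d : nat) u (x y : T) : bool :=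
  [&& x \in ball e d u, y \in ball e d u, e x y &
      ~~ (at_dist e d u x && at_dist e d u y)].

Definition Gamma e (d : nat) u : {set T} := ball e d u :\ u.

Definition view_set e pi (F : {set {set T}}) (d : nat) u : view -> Prop :=
  fun t => exists2 S, S \in F & tau e pi S d u = t.

End Graphs.

Definition rooted_nbhd_iso (T1 T2 : finType) (e1 : rel T1) (e2 : rel T2)
    (d : nat) (u1 : T1) (u2 : T2) : Prop :=
  exists (f : T1 -> T2) (g : T2 -> T1),
    (forall x, x \in ball e1 d u1 -> f x \in ball e2 d u2) /\
    (forall y, y \in ball e2 d u2 -> g y \in ball e1 d u1) /\
    (forall x, x \in ball e1 d u1 -> g (f x) = x) /\
    (forall y, y \in ball e2 d u2 -> f (g y) = y) /\
    f u1 = u2 /\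
    (forall x y, x \in ball e1 d u1 -> y \in ball e1 d u1 ->
        nbhd_edge e2 d u2 (f x) (f y) = nbhd_edge e1 d u1 x y).

From mathcomp Require Import all_boot.

Set Implicit Arguments.
Unset Strict Implicit.
Unset Printing Implicit Defensive.

(* Follow a port path p from the root: it gets stuck or meets the dropped set
   S before its end (Blocked), meets S first at its last node (Hit), or avoids
   S (Clear); the view tau_d(u;S) records this outcome for every p of length
   at most d.  For S = {v} the Hit paths are those visiting v for the first
   time at their end.  Matching singleton dropouts through the equal view sets
   sends every such path of v in G1 to one of some w in G2, which yields maps
   between the d-balls.  They are mutually inverse since a path has a single
   endpoint, and they preserve the edges of N_d: for an edge xy with x not
   farther from the root than y, a shortest path to x followed by the port
   towards y visits y first at its end. *)

Inductive probe_result := Blocked | Hit | Clear.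

Fixpoint view_probe (t : view) (p : seq nat) {struct p} : probe_result :=
  match p, t with
  | [::], _ => Clear
  | _ :: _, VLeaf _ => Blocked
  | i :: p', VNode _ ms =>
      if i < size ms then
        match nth None ms i with
        | None => if p' is [::] then Hit else Blocked
        | Some (_, t') => view_probe t' p'
        end
      else Blocked
  end.

Section PortPaths.
Variables (T : finType) (e : rel T) (pi : T -> T -> nat).
Implicit Types (S : {set T}) (u v w x y z : T) (p q : seq nat).

Definition step v i : option T := [pick w | e v w && (pi v w == i.+1)].

Fixpoint walk v p : option (seq T) :=
  if p is i :: p' then
    if step v i is Some w then omap (cons w) (walk w p') else None
  else Some [::].

Fixpoint probe S v p : probe_result :=
  if p is i :: p' then
    match step v i with
    | Some w => if w \in S then (if p' is [::] then Hit else Blocked)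
                else probe S w p'
    | None => Blocked
    end
  else Clear.

Definition first_visit u q x :=
  exists xs, [/\ walk u q = Some xs, last u xs = x & x \notin belast u xs].

Lemma step_spec v i w : step v i = Some w -> e v w /\ pi v w = i.+1.
Proof. by rewrite /step; case: pickP => // w' /andP[evw /eqP piw] [<-]. Qed.

Lemma walk_rcons v p i : walk v (rcons p i) =
  if walk v p is Some xs then omap (rcons xs) (step (last v xs) i) else None.
Proof.
elim: p v => [|j p IH] v /=; first by case: (step v i).
case: (step v j) => [w|] //=; rewrite IH.
by case: (walk w p) => [xs|] //=; case: (step _ i).
Qed.

Lemma ball_root k u : u \in ball e k u.
Proof. by elim: k => [|k IH] /=; rewrite inE ?IH. Qed.

Lemma ball_mono j k u : j <= k -> {subset ball e j u <= ball e k u}.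
Proof.
move=> /subnK <-; elim: (k - j) => [|n IH] x // /IH.
by rewrite addSn /= inE => ->.
Qed.

Lemma walk_ball u q xs : walk u q = Some xs -> last u xs \in ball e (size q) u.
Proof.
elim/last_ind: q xs => [|q i IH] xs; first by case=> <-; rewrite inE.
rewrite walk_rcons size_rcons; case wq: (walk u q) => [ys|] //.
case st: (step (last u ys) i) => [w|] //= [<-]; rewrite last_rcons /= !inE.
apply/orP; right; apply/existsP; exists (last u ys).
by rewrite IH //= (step_spec st).1.
Qed.

Lemma at_dist_exists k u x :
  x \in ball e k u -> exists2 m, m <= k & at_dist e m u x.
Proof.
move=> xk; have ex : exists m, x \in ball e m u by exists k.
case: (ex_minnP ex) => m xm minm; exists m; first exact: minm.
rewrite /at_dist xm; case: m xm minm => // m _ minm.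
by apply/negP => /minm; rewrite ltnn.
Qed.

Lemma at_dist_min m k u x : at_dist e m u x -> x \in ball e k u -> m <= k.
Proof.
case: m => // m /andP[_ xm] xk; rewrite leqNgt ltnS.
by apply: contra xm => km; apply: ball_mono km _ xk.
Qed.

Lemma nbhd_edge_sym d u x y :
  symmetric e -> nbhd_edge e d u x y = nbhd_edge e d u y x.
Proof.
move=> se; rewrite /nbhd_edge se (andbC (at_dist _ _ _ x)).
by case: (x \in _); case: (y \in _).
Qed.

Lemma probe_hit_walk S u q :
  probe S u q = Hit -> exists2 xs, walk u q = Some xs & last u xs \in S.
Proof.
elim: q u => [|i q IH] u //=; case: (step u i) => [w|] //.
case: ifP => wS; first by case: q {IH} => // _; exists [:: w].
by move/IH => [xs -> xsS]; exists (w :: xs).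
Qed.

Lemma probe_hit_sub S S' u q xs : {subset S' <= S} ->
  probe S u q = Hit -> walk u q = Some xs ->
  probe S' u q = if last u xs \in S' then Hit else Clear.
Proof.
move=> sub; elim: q u xs => [|i q IH] u xs //=; case: (step u i) => [w|] //.
case: ifP => wS; first by case: q {IH} => // _ [<-] /=; case: ifP.
move=> hit; case wq: (walk w q) => [ys|] //= [<-] /=.
by rewrite (contraFF (@sub w) wS); apply: IH.
Qed.

Lemma probe_clear_sub S S' u q : {subset S' <= S} ->
  probe S u q = Clear -> probe S' u q = Clear.
Proof.
move=> sub; elim: q u => [|i q IH] u //=; case: (step u i) => [w|] //.
case: ifP => wS; first by case: q {IH}.
by rewrite (contraFF (@sub w) wS); apply: IH.
Qed.

Lemma first_visit_nil u x : first_visit u [::] x <-> x = u.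
Proof.
split=> [[xs [[<-] <- _]] // | ->]; by exists [::].
Qed.

Lemma first_visit_cons u i q w x : step u i = Some w ->
  first_visit u (i :: q) x <-> x != u /\ first_visit w q x.
Proof.
move=> /= st; rewrite /first_visit /= st.
split=> [[xs []] | [xu [ys [-> ex xys]]]].
  case: (walk w q) => //= ys [<-] /= <-; rewrite inE negb_or => /andP[-> ?].
  by split=> //; exists ys.
by exists (w :: ys); rewrite /= inE negb_or ex xu.
Qed.

Lemma first_visit_self u q : first_visit u q u -> q = [::].
Proof.
case: q => // i q; case st: (step u i) => [w|].
  by case/(first_visit_cons _ _ st); rewrite eqxx.
by case=> xs; rewrite /= st; case.
Qed.

Lemma probe1_first_visit u q x :
  x != u -> probe [set x] u q = Hit <-> first_visit u q x.
Proof.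
elim: q u => [|i q IH] u xu.
  by split=> // /first_visit_nil /eqP; rewrite (negbTE xu).
case st: (step u i) => [w|]; last first.
  by rewrite /= st; split=> // -[xs []]; rewrite /= st.
have [fv_uncons fv_cons] := first_visit_cons q x st.
rewrite /= st in_set1.
have [wx|wx] := eqVneq w x.
  subst w; split=> [|/fv_uncons[_ /first_visit_self ->]] //.
  case: q {IH fv_uncons} fv_cons => // fv_cons _.
  by apply: fv_cons; split=> //; apply/first_visit_nil.
have /IH[to_fv of_fv] : x != w by rewrite eq_sym.
by split=> [/to_fv fv | /fv_uncons[_ /of_fv]] //; apply: fv_cons.
Qed.

Lemma first_visit_inj u q x y :
  first_visit u q x -> first_visit u q y -> x = y.
Proof. by move=> [xs [wq <- _]] [ys [+ <- _]]; rewrite wq => -[->]. Qed.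

Lemma first_visit_rcons u q i x y :
  first_visit u q x -> first_visit u (rcons q i) y -> step x i = Some y.
Proof.
move=> [xs [wq <- _]] [ys [+ <- _]]; rewrite walk_rcons wq.
by case: (step _ i) => //= w [<-]; rewrite last_rcons.
Qed.

Lemma first_visit_ball u q x : first_visit u q x -> x \in ball e (size q) u.
Proof. by move=> [xs [/walk_ball + <- _]]. Qed.

Hypothesis pn : port_numbering e pi.

Lemma step_pi v w : e v w -> step v (pi v w).-1 = Some w.
Proof.
move=> evw; have [pi_inj pi_range] := pn v.
have wN : w \in nbrs e v by rewrite inE.
have /andP[pi_pos _] := pi_range w wN.
rewrite /step prednK //; case: pickP => [x /andP[evx /eqP pix]|/(_ w)].
  by congr Some; apply: pi_inj; rewrite ?inE.
by rewrite evw eqxx.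
Qed.

(* [pi v] maps the [deg e v] neighbours of [v] injectively into [1, deg e v],
   so every port is used. *)
Lemma step_defined v i : (step v i != None) = (i < deg e v).
Proof.
have [pi_inj pi_range] := pn v.
apply/idP/idP.
  case st: (step v i) => [w|] // _; have [evw piw] := step_spec st.
  have /pi_range : w \in nbrs e v by rewrite inE.
  by rewrite piw => /andP[].
move=> ilt; set ports := map (pi v) (enum (nbrs e v)).
have ports_uniq : uniq ports.
  rewrite map_inj_in_uniq ?enum_uniq // => x y.
  by rewrite !mem_enum; apply: pi_inj.
have ports_sub : {subset ports <= iota 1 (deg e v)}.
  move=> j /mapP [x]; rewrite mem_enum => /pi_range /andP[x0 xd] ->.
  by rewrite mem_iota add1n ltnS x0 xd.
have [|_ ports_eq] := uniq_min_size ports_uniq ports_sub.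
  by rewrite size_iota size_map -cardE.
have : i.+1 \in ports by rewrite ports_eq mem_iota add1n ltnS.
case/mapP => x; rewrite mem_enum inE => evx pix.
by rewrite -[i]/(i.+1.-1) pix step_pi.
Qed.

Lemma view_probe_tau k S v p :
  size p <= k -> view_probe (tau e pi S k v) p = probe S v p.
Proof.
elim: k v p => [|k IH] v [|i p] //= pk.
rewrite size_map size_iota -step_defined.
case st: (step v i) => [w|] //=.
rewrite (nth_map 0) ?size_iota -?step_defined ?st //.
rewrite nth_iota -?step_defined ?st //.
rewrite add1n -/(step v i) st.
by case: (w \in S) => //; apply: IH.
Qed.

Lemma walk_in_ball k u x : x \in ball e k u ->
  exists q xs, [/\ walk u q = Some xs, last u xs = x, size q <= k &
    forall z, z \in belast u xs -> exists2 j, j < k & z \in ball e j u].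
Proof.
elim: k x => [|k IH] x /=; first by rewrite inE => /eqP ->; exists [::], [::].
rewrite !inE => /orP[/IH [q [xs [wq lx sq near]]] | /existsP[z /andP[zk ezx]]].
  exists q, xs; split=> // [|y /near[j jk yj]]; first exact: leqW.
  by exists j => //; apply: ltnW.
have [q [xs [wq lz sq near]]] := IH z zk.
exists (rcons q (pi z x).-1), (rcons xs x).
rewrite walk_rcons wq lz step_pi // last_rcons size_rcons ltnS.
rewrite belast_rcons lastI lz.
split=> // y; rewrite mem_rcons inE => /orP[/eqP -> | /near[j jk yj]].
  by exists k.
by exists j => //; apply: ltnW.
Qed.

Lemma shortest_walk m u x : at_dist e m u x ->
  exists q xs, [/\ walk u q = Some xs, last u xs = x, size q <= m &
    forall y m', m <= m' -> at_dist e m' u y -> y \notin belast u xs].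
Proof.
move=> xm; have /walk_in_ball [q [xs [wq lx sq near]]] : x \in ball e m u.
  by case/andP: xm.
exists q, xs; split=> // y m' mm' ym'; apply/negP => /near[j jm yj].
by have := at_dist_min ym' yj; rewrite leqNgt (leq_trans jm mm').
Qed.

Lemma first_visit_exists k u x :
  x \in ball e k u -> exists2 q, size q <= k & first_visit u q x.
Proof.
case/at_dist_exists => m mk xm.
have [q [xs [wq lx sq far]]] := shortest_walk xm.
by exists q; [apply: leq_trans mk | exists xs; split=> //; apply: far xm].
Qed.

Lemma first_visit_edge mx my u x y : e x y -> x != y -> mx <= my ->
  at_dist e mx u x -> at_dist e my u y ->
  exists2 q, size q <= mx &
    first_visit u q x /\ first_visit u (rcons q (pi x y).-1) y.
Proof.
move=> exy xy le xmx ymy; have [q [xs [wq lx sq far]]] := shortest_walk xmx.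
exists q => //; split; first by exists xs; split=> //; apply: far xmx.
exists (rcons xs y); rewrite walk_rcons wq lx step_pi // last_rcons.
by rewrite belast_rcons lastI lx mem_rcons inE negb_or eq_sym xy (far _ my).
Qed.

End PortPaths.

Section Correspondence.
Variables (T1 T2 : finType) (e1 : rel T1) (pi1 : T1 -> T1 -> nat) (u1 : T1).
Variables (e2 : rel T2) (pi2 : T2 -> T2 -> nat) (u2 : T2) (d : nat).

Definition hit_sub v w := forall q, size q <= d ->
  first_visit e1 pi1 u1 q v -> first_visit e2 pi2 u2 q w.

Definition hit_map (f : T1 -> T2) := forall x, x \in ball e1 d u1 ->
  f x \in ball e2 d u2 /\ hit_sub x (f x).

Lemma hit_map_root f : hit_map f -> f u1 = u2.
Proof.
move=> hf; have [_ /(_ [::] isT) fv_nil] := hf u1 (ball_root e1 d u1).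
by apply/first_visit_nil/fv_nil/first_visit_nil.
Qed.

Hypothesis pn1 : port_numbering e1 pi1.

Lemma hit_map_edge_le f x y mx my : hit_map f ->
  mx <= my -> at_dist e1 mx u1 x -> at_dist e1 my u1 y -> x != y ->
  nbhd_edge e1 d u1 x y -> nbhd_edge e2 d u2 (f x) (f y).
Proof.
move=> hf le xmx ymy xy /and4P[xb yb exy not_far].
have mxd : mx < d.
  have myd := at_dist_min ymy yb.
  rewrite ltn_neqAle (leq_trans le myd) andbT; apply: contraNneq not_far => mxd.
  have myd' : my = d by apply/eqP; rewrite eqn_leq myd -mxd le.
  by move: xmx ymy; rewrite mxd myd' => -> ->.
have [q sq [fvx fvy]] := first_visit_edge pn1 exy xy le xmx ymy.
have [_ hx] := hf x xb; have [fyb hy] := hf y yb.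
have sqd : size q < d := leq_ltn_trans sq mxd.
have fvfx := hx q (ltnW sqd) fvx.
have fvfy : first_visit e2 pi2 u2 (rcons q (pi1 x y).-1) (f y).
  by apply: hy fvy; rewrite size_rcons.
have fxmx : f x \in ball e2 mx u2 := ball_mono sq (first_visit_ball fvfx).
rewrite /nbhd_edge (ball_mono (ltnW mxd) fxmx) fyb.
rewrite (step_spec (first_visit_rcons fvfx fvfy)).1 /=.
apply: contraL fxmx => /andP[/at_dist_min fxd _].
by apply/negP => /fxd; rewrite leqNgt mxd.
Qed.

Lemma hit_map_edge f x y : simple_graph e1 -> symmetric e2 -> hit_map f ->
  nbhd_edge e1 d u1 x y -> nbhd_edge e2 d u2 (f x) (f y).
Proof.
move=> [sym1 irr1] sym2 hf exy; have /and4P[xb yb _ _] := exy.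
have xy : x != y.
  by apply: contraTneq exy => ->; rewrite /nbhd_edge irr1 /= !andbF.
have [mx _ xmx] := at_dist_exists xb; have [my _ ymy] := at_dist_exists yb.
have [le|/ltnW le] := leqP mx my.
  exact: hit_map_edge_le le xmx ymy xy exy.
rewrite nbhd_edge_sym //; apply: hit_map_edge_le le ymy xmx _ _ => //.
  by rewrite eq_sym.
by rewrite nbhd_edge_sym.
Qed.

End Correspondence.

Lemma hit_map_cancel (T1 T2 : finType) (e1 : rel T1) (pi1 : T1 -> T1 -> nat) u1
    (e2 : rel T2) (pi2 : T2 -> T2 -> nat) u2 d f g :
  port_numbering e1 pi1 ->
  hit_map e1 pi1 u1 e2 pi2 u2 d f -> hit_map e2 pi2 u2 e1 pi1 u1 d g ->
  {in ball e1 d u1, cancel f g}.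
Proof.
move=> pn1 hf hg x xb; have [q sq fvx] := first_visit_exists pn1 xb.
have [fxb /(_ q sq fvx) fvfx] := hf x xb.
have [_ /(_ q sq fvfx) fvgfx] := hg _ fxb.
exact: first_visit_inj fvgfx fvx.
Qed.

Section Matching.
Variables (d : nat) (T1 T2 : finType).
Variables (e1 : rel T1) (pi1 : T1 -> T1 -> nat) (u1 : T1) (F1 : {set {set T1}}).
Variables (e2 : rel T2) (pi2 : T2 -> T2 -> nat) (u2 : T2) (F2 : {set {set T2}}).
Hypotheses (pn1 : port_numbering e1 pi1) (pn2 : port_numbering e2 pi2).
Hypothesis F1_singletons : forall v, v \in Gamma e1 d u1 -> [set v] \in F1.
Hypothesis F2_singletons : forall w, w \in Gamma e2 d u2 -> [set w] \in F2.
Hypothesis F2_sub : forall S, S \in F2 -> S \subset Gamma e2 d u2.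
Hypothesis same_views :
  forall t, view_set e1 pi1 F1 d u1 t <-> view_set e2 pi2 F2 d u2 t.

Lemma same_view_probe S1 S2 p :
  tau e1 pi1 S1 d u1 = tau e2 pi2 S2 d u2 -> size p <= d ->
  probe e1 pi1 S1 u1 p = probe e2 pi2 S2 u2 p.
Proof.
by move=> eq_tau pd; rewrite -(view_probe_tau pn1 _ _ pd) eq_tau view_probe_tau.
Qed.

(* The view of the 1-dropout {v} is also seen with some dropout set S of G2,
   and S contains the node w at which a first-visit path of v ends in G2; the
   view of {w} is in turn seen with some S' of G1, which must contain v.  A
   first-visit path of v that were not one of w would then avoid S' in G1
   although it hits v. *)
Lemma exists_hit_sub v : v \in Gamma e1 d u1 ->
  exists2 w, w \in Gamma e2 d u2 & hit_sub e1 pi1 u1 e2 pi2 u2 d v w.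
Proof.
move=> vG; have /setD1P[vu1 vb] := vG.
have [S SF2 tauS] : view_set e2 pi2 F2 d u2 (tau e1 pi1 [set v] d u1).
  by apply/same_views; exists [set v]; first exact: F1_singletons.
have probe_S := same_view_probe (esym tauS).
have [p0 sp0 fv0] := first_visit_exists pn1 vb.
have hit0 : probe e1 pi1 [set v] u1 p0 = Hit by apply/probe1_first_visit.
have /probe_hit_walk[zs wz0 w0S] : probe e2 pi2 S u2 p0 = Hit.
  by rewrite -probe_S.
set w0 := last u2 zs in w0S.
have w0G : w0 \in Gamma e2 d u2 := subsetP (F2_sub SF2) _ w0S.
have [S' S'F1 tauS'] : view_set e1 pi1 F1 d u1 (tau e2 pi2 [set w0] d u2).
  by apply/same_views; exists [set w0]; first exact: F2_singletons.
have probe_S' := same_view_probe tauS'.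
have w0_sub : {subset [set w0] <= S} by move=> z /set1P ->.
have vS' : v \in S'.
  have : probe e1 pi1 S' u1 p0 = Hit.
    by rewrite probe_S' // (probe_hit_sub w0_sub _ wz0) ?set11 // -probe_S.
  by case/probe_hit_walk => xs; case: fv0 => xs' [-> <- _] [->].
exists w0 => // q sq fvq; have /setD1P[w0u2 _] := w0G.
have hitq : probe e1 pi1 [set v] u1 q = Hit by apply/probe1_first_visit.
have hitSq : probe e2 pi2 S u2 q = Hit by rewrite -probe_S.
have [zs' wzq _] := probe_hit_walk hitSq.
apply/probe1_first_visit => //.
move: (probe_hit_sub w0_sub hitSq wzq); case: ifP => // _ clear_w0.
have v_sub : {subset [set v] <= S'} by move=> z /set1P ->.
have clear_S' : probe e1 pi1 S' u1 q = Clear by rewrite probe_S'.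
by rewrite (probe_clear_sub v_sub clear_S') in hitq.
Qed.

Lemma exists_hit_map : exists f, hit_map e1 pi1 u1 e2 pi2 u2 d f.
Proof.
suff /fin_all_exists[f hf] : forall x, exists y, x \in ball e1 d u1 ->
    y \in ball e2 d u2 /\ hit_sub e1 pi1 u1 e2 pi2 u2 d x y by exists f.
move=> x; have [->|xu1] := eqVneq x u1.
  exists u2 => _; split=> [|q _ /first_visit_self ->]; first exact: ball_root.
  exact/first_visit_nil.
have [xb|] := boolP (x \in ball e1 d u1); last by exists u2.
have [|y /setD1P[_ yb] hxy] := exists_hit_sub (v := x).
  by rewrite !inE xu1.
by exists y.
Qed.

End Matching.

Theorem theorem4 (d : nat) (T1 T2 : finType)
    (e1 : rel T1) (pi1 : T1 -> T1 -> nat) (u1 : T1) (F1 : {set {set T1}})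
    (e2 : rel T2) (pi2 : T2 -> T2 -> nat) (u2 : T2) (F2 : {set {set T2}}) :
  0 < d ->
  simple_graph e1 -> port_numbering e1 pi1 ->
  simple_graph e2 -> port_numbering e2 pi2 ->
  (forall S, S \in F1 -> S \subset Gamma e1 d u1) ->
  (forall v, v \in Gamma e1 d u1 -> [set v] \in F1) ->
  (forall S, S \in F2 -> S \subset Gamma e2 d u2) ->
  (forall v, v \in Gamma e2 d u2 -> [set v] \in F2) ->
  ~ rooted_nbhd_iso e1 e2 d u1 u2 ->
  ~ (forall t, view_set e1 pi1 F1 d u1 t <-> view_set e2 pi2 F2 d u2 t).
Proof.
(* For d = 0 the statement holds as well: N_0 has no edges. *)
move=> _ sg1 pn1 sg2 pn2 F1_sub F1_singletons F2_sub F2_singletons not_iso.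
move=> same_views; apply: not_iso.
have [f hf] :=
  exists_hit_map pn1 pn2 F1_singletons F2_singletons F2_sub same_views.
have [g hg] := exists_hit_map pn2 pn1 F2_singletons F1_singletons F1_sub
  (fun t => iff_sym (same_views t)).
have gK := hit_map_cancel pn1 hf hg; have fK := hit_map_cancel pn2 hg hf.
exists f, g; split=> [x /hf[] //|]; split=> [y /hg[] //|].
split=> //; split=> //; split; first exact: hit_map_root hf.
move=> x y xb yb; apply/idP/idP.
  by move=> /(hit_map_edge pn2 sg2 (proj1 sg1) hg); rewrite !gK.
exact: (hit_map_edge pn1 sg1 (proj1 sg2) hf).
Qed.
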